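(* Let $q>2$ be a prime power and let $M$ be a simple $GF(q)$-representable matroid of rank $r\geq 3$. Suppose that $M\not\cong PG(r-1,q)$ but that $\operatorname{si}(M/e)\cong PG(r-2,q)$ for all $e\in E(M)$. Then $M$ has a member of $\mathcal{N}=\{U_{2,k}:3\leq k\leq q\}\cup\{U_{3,q+2}\}$ as an induced minor.
   Context: $\operatorname{si}$ denotes simplification; every contraction is followed by simplification. An induced minor of $M$ is a matroid obtained from $M$ by a sequence of restrictions to flats and contractions (each followed by simplification). *)

From HB Require Import structures.
From mathcomp Require Import all_boot all_order all_algebra.
Set Implicit Arguments. Unset Strict Implicit. Unset Printing Implicit Defensive.
Import GRing.Theory.

(* All matroids appearing in the statement are GF(q)-representable (or
   derived from one by restriction/contraction/simplification), hence genuine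
   matroids; the operations below are the standard ones defined via rank. *)
Record matroid (T : finType) := Matroid {
  ground : {set T};
  indep : {set T} -> bool }.

Section Ops.
Variable T : finType.
Implicit Types (M : matroid T) (X Y S F : {set T}) (e f : T).

Definition mrank M X : nat :=
  \max_(Y : {set T} | (Y \subset X) && indep M Y) #|Y|.

Definition loop M e := mrank M [set e] == 0.

Definition parallel M e f :=
  [&& e \in ground M, f \in ground M, ~~ loop M e, ~~ loop M f
    & mrank M [set e; f] == 1].

Definition simple M : Prop :=
  (forall e, e \in ground M -> mrank M [set e] = 1) /\
  (forall e f, e \in ground M -> f \in ground M -> e != f ->
      mrank M [set e; f] = 2).

Definition is_flat M F : Prop :=
  F \subset ground M /\
  forall e, e \in ground M -> e \notin F -> mrank M (e |: F) = (mrank M F).+1.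

Definition restrict M S : matroid T :=
  Matroid (ground M :&: S) (fun Y => (Y \subset ground M :&: S) && indep M Y).

Definition contract M X : matroid T :=
  Matroid (ground M :\: X)
    (fun Y => (Y \subset ground M :\: X) &&
              (mrank M (Y :|: X) == #|Y| + mrank M X)).

Definition is_si M N : Prop :=
  exists S, [/\ S \subset ground M,
    (forall e, e \in S -> ~~ loop M e),
    (forall e f, e \in S -> f \in S -> parallel M e f -> e = f),
    (forall e, e \in ground M -> ~~ loop M e ->
        exists2 f, f \in S & (f == e) || parallel M e f)
    & N = restrict M S].

Inductive induced_minor M : matroid T -> Prop :=
| im_refl : induced_minor M M
| im_restr N F : induced_minor M N -> is_flat N F ->
    induced_minor M (restrict N F)
| im_contr N e N' : induced_minor M N -> e \in ground N ->
    is_si (contract N [set e]) N' -> induced_minor M N'.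

End Ops.

Definition miso (T1 T2 : finType) (M1 : matroid T1) (M2 : matroid T2) : Prop :=
  exists f : T1 -> T2,
    [/\ {in ground M1 &, injective f}, f @: ground M1 = ground M2
      & forall X : {set T1}, X \subset ground M1 -> indep M1 X = indep M2 (f @: X)].

Definition has_induced_minor (T1 T2 : finType) (M : matroid T1)
  (N : matroid T2) : Prop :=
  exists2 M', induced_minor M M' & miso M' N.

Definition prime_power (q : nat) : Prop :=
  exists p k, [/\ prime p, 0 < k & q = p ^ k].

(* GF(q)-representability: elements sent to vectors of F^n, F a field of
   order q; a set is independent iff its vectors are distinct and linearly
   independent *)
Definition representable (q : nat) (T : finType) (M : matroid T) : Prop :=
  exists (F : finFieldType) (n : nat) (v : T -> 'rV[F]_n),
    #|F| = q /\
    forall X : {set T}, indep M X = (X \subset ground M) && free [seq v x | x <- enum X].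

(* The projective geometry PG(n-1, F): points are the 1-dimensional
   subspaces of F^n (given as sets of vectors); independence is linear
   independence of chosen nonzero representatives. *)
Definition pg_point (F : finFieldType) (n : nat) (P : {set 'rV[F]_n}) : bool :=
  [exists v : 'rV[F]_n, (v != 0%R) && (P == [set (c *: v)%R | c : F])].

Definition pg_rep (F : finFieldType) (n : nat) (P : {set 'rV[F]_n}) : 'rV[F]_n :=
  odflt 0%R [pick v in P | v != 0%R].

Definition PGmat (F : finFieldType) (n : nat) : matroid {set 'rV[F]_n} :=
  Matroid [set P | pg_point P]
    (fun X => (X \subset [set P | pg_point P]) &&
              free [seq pg_rep x | x <- enum X]).

Definition isPG (T : finType) (M : matroid T) (k q : nat) : Prop :=
  exists F : finFieldType, #|F| = q /\ miso M (PGmat F k.+1).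

Definition U (a b : nat) : matroid 'I_b :=
  Matroid [set: 'I_b] (fun X => #|X| <= a).

(* Represent M by vectors [v g] and let V be their span, so that M is a set of
   points of the projective space of V.  Counting the lines of V through a point
   e of M, the hypothesis on si(M/e) says that every line of V through a point of
   M carries a second point of M.  Since M is not PG(r-1,q), some vector w of V
   spans no point of M.  If a line with at least three points of M is not
   covered by points of M, it carries at most q of them, and M restricted to it
   is U(2,k).  Otherwise every line with three points is covered, so no line
   through w has three points; a configuration argument, which needs q > 2,
   shows that a plane through w and a point e of M contains no three collinear
   points of M, and counting the lines of this plane through e gives exactly
   q + 2 points: M restricted to the plane is U(3,q+2). *)

From HB Require Import structures.
From mathcomp Require Import all_boot all_order all_algebra finfield.
From mathcomp Require Import zify.
From Stdlib Require Import Classical.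
Set Implicit Arguments. Unset Strict Implicit. Unset Printing Implicit Defensive.
Import GRing.Theory.

Section Lines.
Local Open Scope ring_scope.
Variables (K : fieldType) (vT : vectType K).
Implicit Types (x y : vT) (U W L : {vspace vT}).

Lemma dim_add_line x W : x \notin W -> \dim (<[x]> + W) = (\dim W).+1.
Proof.
move=> xW; have x0 : x != 0 by apply: contraNneq xW => ->; rewrite mem0v.
have capxW : (<[x]> :&: W = 0)%VS.
  apply/eqP; rewrite -subv0; apply/subvP => y /memv_capP [/vlineP [k ->] kxW].
  rewrite memv0; have [->|k0] := eqVneq k 0; first by rewrite scale0r.
  by case/negP: xW; rewrite -(scalerK k0 x) memvZ.
by have := dimv_sum_cap <[x]> W; rewrite capxW dimv0 addn0 dim_vline x0 add1n.
Qed.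

Lemma vline_eq x y : y != 0 -> y \in <[x]>%VS -> <[y]>%VS = <[x]>%VS.
Proof.
move=> y0 yx; apply/eqP; rewrite eqEdim -memvE yx !dim_vline y0.
by case: (x == 0).
Qed.

Lemma dim2_span L x y : \dim L = 2%N -> x \in L -> y \in L -> x != 0 ->
  y \notin <[x]>%VS -> L = (<[x]> + <[y]>)%VS.
Proof.
move=> dL xL yL x0 yx; apply/esym/eqP; rewrite eqEdim subv_add -!memvE xL yL.
by rewrite addvC dim_add_line // dim_vline x0 dL.
Qed.

Lemma dim2_eq L L' x y : \dim L = 2%N -> \dim L' = 2%N -> x != 0 ->
  y \notin <[x]>%VS -> x \in L -> y \in L -> x \in L' -> y \in L' -> L = L'.
Proof.
move=> dL dL' x0 yx xL yL xL' yL'.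
by rewrite (dim2_span dL xL yL x0 yx) (dim2_span dL' xL' yL' x0 yx).
Qed.

Lemma exists_notin U W : (\dim W < \dim U)%N -> exists2 y, y \in U & y \notin W.
Proof.
move=> dWU; have /allPn [y yU yW] : ~~ all (mem W) (vbasis U).
  apply: contraTN dWU => /allP UW; rewrite -leqNgt; apply: dimvS.
  by rewrite -(span_basis (vbasisP U)); apply/span_subvP.
by exists y => //; apply: vbasis_mem.
Qed.

Lemma dim2_cap_neq0 U L W : \dim U = 3%N -> (L <= U)%VS -> (W <= U)%VS ->
  \dim L = 2%N -> \dim W = 2%N -> exists2 y, y \in (L :&: W)%VS & y != 0.
Proof.
move=> dU LU WU dL dW; have [|y yLW] := @exists_notin (L :&: W)%VS 0%VS.
  have := dimv_sum_cap L W; have := dimvS (_ : (L + W <= U)%VS).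
  by rewrite subv_add LU WU dU dL dW dimv0 => /(_ isT); lia.
by rewrite memv0; exists y.
Qed.

Lemma exists_dim3 V W : (W <= V)%VS -> \dim W = 2%N -> (2 < \dim V)%N ->
  exists U, [/\ (W <= U)%VS, (U <= V)%VS & \dim U = 3%N].
Proof.
move=> WV dW dV; have [|u uV uW] := @exists_notin V W; first by rewrite dW.
exists (<[u]> + W)%VS; split; first exact: addvSr.
  by rewrite subv_add -memvE uV WV.
by rewrite dim_add_line // dW.
Qed.

End Lines.

Lemma card_bigcup_uniform (I S : finType) (J : {set I}) (D : I -> {set S}) k :
  {in J &, forall i j, i != j -> [disjoint D i & D j]} ->
  {in J, forall i, #|D i| = k} -> #|\bigcup_(i in J) D i| = (#|J| * k)%N.
Proof.
elim: {J}_.+1 {-2}J (ltnSn #|J|) => // m IH J cardJ disD cardD.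
have [->|[i iJ]] := set_0Vmem J; first by rewrite big_set0 !cards0.
have subJ : J :\ i \subset J by apply: subsetDl.
have disDi : D i :&: \bigcup_(j in J :\ i) D j = set0.
  apply/setP => y; rewrite !inE; apply/negbTE/andP.
  case=> yi /bigcupP [j /setD1P [ji jJ] yj].
  by rewrite eq_sym in ji; have /disjointFr/(_ yi) := disD _ _ iJ jJ ji; rewrite yj.
rewrite (big_setD1 i iJ) /= cardsU disDi cards0 subn0 cardD // IH.
- by rewrite (cardsD1 i J) iJ mulnDl mul1n.
- by rewrite -ltnS (leq_trans _ cardJ) // ltnS (cardsD1 i J) iJ.
- by move=> j j' /(subsetP subJ) jJ /(subsetP subJ) j'J; apply: disD.
- by move=> j /(subsetP subJ); apply: cardD.
Qed.

Section FiniteSpace.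
Local Open Scope ring_scope.
Variables (F : finFieldType) (n : nat).
Local Notation vT := 'rV[F]_n.
Implicit Types (x y : vT) (U W : {vspace vT}).

Definition punct W := [set y | y \in W] :\ 0.

Lemma card_vsetD U W : (W <= U)%VS ->
  #|[set y | y \in U] :\: [set y | y \in W]| = (#|F| ^ \dim U - #|F| ^ \dim W)%N.
Proof.
move=> WU; rewrite cardsD (setIidPr _); first by rewrite !cardsE !card_vspace.
by apply/subsetP => y; rewrite !inE; apply: (subvP WU).
Qed.

Lemma card_punct W : #|punct W| = (#|F| ^ \dim W - 1)%N.
Proof.
have -> : punct W = [set y | y \in W] :\: [set y | y \in (0%VS : {vspace vT})].
  by apply/setP => y; rewrite !inE memv0.
by rewrite card_vsetD ?sub0v // dimv0.
Qed.

Lemma punct_vline_disjoint x y : y \notin <[x]>%VS ->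
  [disjoint punct <[x]> & punct <[y]>].
Proof.
move=> yx; rewrite -setI_eq0; apply/eqP/setP => z; rewrite !inE.
apply/negP => /andP [/andP [z0 zx] /andP [_ zy]]; case/negP: yx.
by rewrite -(vline_eq z0 zx) (vline_eq z0 zy) memv_line.
Qed.

End FiniteSpace.

Section ProjectiveSpace.
Local Open Scope ring_scope.
Variables (F : finFieldType) (m : nat).
Local Notation vT := 'rV[F]_m.
Implicit Types (x : vT) (P : {set vT}).

Lemma imset_scale x : [set c *: x | c : F] = [set y | y \in <[x]>%VS].
Proof.
by apply/setP => y; rewrite inE; apply/imsetP/vlineP => -[c]; exists c.
Qed.

Lemma pg_pointP P :
  reflect (exists2 x : vT, x != 0 & P = [set y | y \in <[x]>%VS]) (pg_point P).
Proof.
apply: (iffP existsP) => [[x /andP [x0 /eqP ->]]|[x x0 ->]].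
  by exists x; rewrite ?imset_scale.
by exists x; rewrite x0 imset_scale eqxx.
Qed.

Lemma pg_rep_vline P : pg_point P -> P = [set y | y \in <[pg_rep P]>%VS].
Proof.
case/pg_pointP => x x0 ->; rewrite /pg_rep; case: pickP => [y /=|/(_ x) /=].
  by rewrite inE => /andP [yx y0]; rewrite (vline_eq y0 yx).
by rewrite inE memv_line x0.
Qed.

Lemma card_pg_points :
  ((#|F| - 1) * #|[set P : {set vT} | pg_point P]|)%N = (#|F| ^ m - 1)%N.
Proof.
have -> : (#|F| ^ m - 1)%N = #|punct (fullv : {vspace vT})|.
  by rewrite card_punct dimvf dim_matrix mul1r.
rewrite mulnC -(@card_bigcup_uniform _ _ _ (fun P => P :\ 0)).
- apply: eq_card => y; rewrite !inE memvf andbT.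
  apply/bigcupP/idP => [[P _] /setD1P [] //|y0].
  exists [set z | z \in <[y]>%VS]; last by rewrite !inE y0 memv_line.
  by rewrite inE; apply/pg_pointP; exists y.
- move=> P Q; rewrite !inE => /pg_pointP [x x0 ->] /pg_pointP [y y0 ->] PQ.
  apply: punct_vline_disjoint; apply: contra PQ => yx.
  by rewrite (vline_eq y0 yx).
- by move=> P; rewrite inE => /pg_pointP [x x0 ->]; rewrite card_punct dim_vline x0.
Qed.

End ProjectiveSpace.

Lemma indep_leq_mrank (S : finType) (N : matroid S) (Y Z : {set S}) :
  Y \subset Z -> indep N Y -> (#|Y| <= mrank N Z)%N.
Proof.
move=> YZ indY; apply: (@leq_bigmax_cond _ _ (fun Y : {set S} => #|Y|)).
by rewrite YZ indY.
Qed.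

Section Represented.
Local Open Scope ring_scope.
Variables (F : finFieldType) (n : nat) (T : finType) (v : T -> 'rV[F]_n)
  (M : matroid T).
Hypothesis Mrep : forall X,
  indep M X = (X \subset ground M) && free [seq v x | x <- enum X].
Local Notation E := (ground M).
Local Notation vT := 'rV[F]_n.
Implicit Types (X Y : {set T}) (L U W : {vspace vT}).

Definition vspan X := <<[seq v x | x <- enum X]>>%VS.

Lemma vspan_mem X g : g \in X -> v g \in vspan X.
Proof. by move=> gX; apply/memv_span/map_f; rewrite mem_enum. Qed.

Lemma vspan_subP X U : reflect (forall g, g \in X -> v g \in U) (vspan X <= U)%VS.
Proof.
apply: (iffP span_subvP) => [XU g gX|XU y /mapP [g]].
  by apply/XU/map_f; rewrite mem_enum.
by rewrite mem_enum => gX ->; apply: XU.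
Qed.

Lemma vspanS X Y : X \subset Y -> (vspan X <= vspan Y)%VS.
Proof. by move=> XY; apply/vspan_subP => g /(subsetP XY); apply: vspan_mem. Qed.

Lemma vspanU X Y : vspan (X :|: Y) = (vspan X + vspan Y)%VS.
Proof.
apply/eqP; rewrite eqEsubv subv_add !vspanS ?subsetUl ?subsetUr // !andbT.
apply/vspan_subP => g; rewrite inE => /orP [] gXY.
  by rewrite (subvP (addvSl _ _)) ?vspan_mem.
by rewrite (subvP (addvSr _ _)) ?vspan_mem.
Qed.

Lemma vspan1 g : vspan [set g] = <[v g]>%VS.
Proof. by rewrite /vspan enum_set1 span_seq1. Qed.

Lemma vspan0 : vspan set0 = 0%VS.
Proof. by rewrite /vspan enum_set0 span_nil. Qed.

Lemma indepE X : indep M X = (X \subset E) && (\dim (vspan X) == #|X|).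
Proof. by rewrite Mrep /free size_map -cardE. Qed.

Lemma exists_vspan_basis X :
  exists Y, [/\ Y \subset X, \dim (vspan Y) = #|Y| & vspan Y = vspan X].
Proof.
elim: {X}_.+1 {-2}X (ltnSn #|X|) => // k IH X cardX.
have [->|[g gX]] := set_0Vmem X; first by exists set0; rewrite vspan0 dimv0 cards0.
have X_def : X = g |: (X :\ g) by rewrite setD1K.
have [|Y [YX dimY spanY]] := IH (X :\ g).
  by rewrite -ltnS (leq_trans _ cardX) // ltnS (cardsD1 g X) gX.
have YX' : Y \subset X := subset_trans YX (subsetDl _ _).
have [gY|gY] := boolP (v g \in vspan Y).
  exists Y; split => //; rewrite X_def vspanU vspan1 -spanY; apply/esym/addv_idPr.
  by rewrite -memvE.
exists (g |: Y); split.
- by rewrite subUset sub1set gX.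
- rewrite vspanU vspan1 dim_add_line // cardsU1 dimY.
  by rewrite (contra (@vspan_mem Y g) gY).
- by rewrite [in RHS]X_def !vspanU spanY.
Qed.

Lemma mrank_vspan X : X \subset E -> mrank M X = \dim (vspan X).
Proof.
move=> XE; apply/eqP; rewrite eqn_leq; apply/andP; split.
  apply/bigmax_leqP => Y /andP [YX]; rewrite indepE => /andP [_ /eqP <-].
  exact/dimvS/vspanS.
have [Y [YX dimY <-]] := exists_vspan_basis X; rewrite dimY.
by apply: (indep_leq_mrank YX); rewrite indepE dimY eqxx (subset_trans YX XE).
Qed.

Hypothesis Msimple : simple M.

Lemma v_neq0 g : g \in E -> v g != 0.
Proof.
move=> gE; have := Msimple.1 g gE; rewrite mrank_vspan ?sub1set // vspan1.
by rewrite dim_vline; case: (v g != 0).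
Qed.

Lemma v_notin_vline g h : g \in E -> h \in E -> g != h -> v h \notin <[v g]>%VS.
Proof.
move=> gE hE gh; have := Msimple.2 g h gE hE gh.
rewrite mrank_vspan ?subUset ?sub1set ?gE ?hE // vspanU !vspan1.
move/eqP; apply: contraTN => hg; rewrite (addv_idPl _) -?memvE //.
by rewrite dim_vline v_neq0.
Qed.

Lemma v_vline_inj g h : g \in E -> h \in E -> v h \in <[v g]>%VS -> h = g.
Proof.
move=> gE hE; apply: contraTeq; rewrite eq_sym.
exact: v_notin_vline.
Qed.

Definition pline g h := (<[v g]> + <[v h]>)%VS.

Lemma pline_meml g h : v g \in pline g h.
Proof. by rewrite (subvP (addvSl _ _)) ?memv_line. Qed.

Lemma pline_memr g h : v h \in pline g h.
Proof. by rewrite (subvP (addvSr _ _)) ?memv_line. Qed.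

Lemma pline_sub g h L : v g \in L -> v h \in L -> (pline g h <= L)%VS.
Proof. by move=> gL hL; rewrite subv_add -!memvE gL hL. Qed.

Lemma dim_pline g h : g \in E -> h \in E -> g != h -> \dim (pline g h) = 2%N.
Proof.
move=> gE hE gh; rewrite /pline addvC dim_add_line ?v_notin_vline //.
by rewrite dim_vline v_neq0.
Qed.

Lemma indep_card_le2 X : X \subset E -> (#|X| <= 2)%N -> indep M X.
Proof.
move=> XE; rewrite indepE XE /= leq_eqVlt ltnS leq_eqVlt ltnS leqn0.
case/or3P => [/cards2P [g [h [gh X_def]]]|/cards1P [g X_def]|/eqP/cards0_eq ->].
- have /andP [gE hE] : (g \in E) && (h \in E) by rewrite -!sub1set -subUset -X_def.
  by rewrite X_def vspanU !vspan1 -/(pline g h) dim_pline // cards2 gh.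
- by rewrite X_def vspan1 dim_vline cards1 v_neq0 // -sub1set -X_def.
- by rewrite vspan0 dimv0 cards0.
Qed.

Definition points L := [set g in E | v g \in L].

Definition covered L :=
  forall y, y \in L -> y != 0 -> exists2 g, g \in E & y \in <[v g]>%VS.

Lemma points_sub L : points L \subset E.
Proof. by apply/subsetP => g; rewrite inE => /andP []. Qed.

Lemma pointsS L W : (L <= W)%VS -> points L \subset points W.
Proof.
by move=> LW; apply/subsetP => g; rewrite !inE => /andP [-> /(subvP LW)].
Qed.

Lemma pline_points g h : g \in E -> h \in E ->
  g \in points (pline g h) /\ h \in points (pline g h).
Proof. by move=> gE hE; rewrite !inE gE hE pline_meml pline_memr. Qed.

Lemma vspan_points L : (vspan (points L) <= L)%VS.
Proof. by apply/vspan_subP => g; rewrite inE => /andP []. Qed.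

Lemma flat_points L : is_flat M (points L).
Proof.
split=> [|g gE gL]; first exact: points_sub.
rewrite !mrank_vspan ?subUset ?sub1set ?gE ?points_sub // vspanU vspan1.
rewrite dim_add_line //; apply: contra gL => gspan.
by rewrite inE gE (subvP (vspan_points L)).
Qed.

Lemma indep_points_card L X : X \subset points L -> indep M X -> (#|X| <= \dim L)%N.
Proof.
move=> XL; rewrite indepE => /andP [_ /eqP <-].
exact/dimvS/(subv_trans (vspanS XL))/vspan_points.
Qed.

Lemma card_points_ge3 L g1 g2 g3 : g1 \in points L -> g2 \in points L ->
  g3 \in points L -> g1 != g2 -> g1 != g3 -> g2 != g3 -> (3 <= #|points L|)%N.
Proof.
move=> g1L g2L g3L g12 g13 g23.
have /subset_leq_card : g1 |: (g2 |: [set g3]) \subset points L.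
  by rewrite !subUset !sub1set g1L g2L g3L.
by apply: leq_trans; rewrite !cardsU1 cards1 !inE negb_or g12 g13 g23.
Qed.

Lemma points_line_eq L L' g h : \dim L = 2%N -> \dim L' = 2%N -> g != h ->
  g \in points L -> h \in points L -> g \in points L' -> h \in points L' ->
  L = L'.
Proof.
move=> dL dL' gh; rewrite !inE => /andP [gE gL] /andP [hE hL] /andP [_ gL'] /andP [_ hL'].
exact: dim2_eq dL dL' (v_neq0 gE) (v_notin_vline gE hE gh) gL hL gL' hL'.
Qed.

Lemma covered_point L y : covered L -> y \in L -> y != 0 ->
  exists2 g, g \in points L & v g \in <[y]>%VS.
Proof.
move=> covL yL y0; have [g gE yg] := covL y yL y0.
have gy : v g \in <[y]>%VS by rewrite (vline_eq y0 yg) memv_line.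
by exists g; rewrite // inE gE (subvP _ _ gy) // -memvE.
Qed.

Lemma not_covered L : ~ covered L ->
  exists y, [/\ y \in L, y != 0 & forall g, g \in E -> y \notin <[v g]>%VS].
Proof.
move=> ncovL; apply: NNPP => nex; apply: ncovL => y yL y0; apply: NNPP => ny.
by apply: nex; exists y; split=> // g gE; apply/negP => yg; apply: ny; exists g.
Qed.

Lemma card_bigcup_points L :
  #|\bigcup_(g in points L) punct <[v g]>| = (#|points L| * (#|F| - 1))%N.
Proof.
apply: card_bigcup_uniform => [g h gL hL gh|g].
  by apply: punct_vline_disjoint; apply: v_notin_vline; rewrite ?(subsetP (points_sub L)).
by move/(subsetP (points_sub L)) => gE; rewrite card_punct dim_vline v_neq0.
Qed.

Lemma bigcup_points_sub L : \bigcup_(g in points L) punct <[v g]> \subset punct L.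
Proof.
apply/bigcupsP => g; rewrite inE => /andP [_ gL]; apply/subsetP => y.
by rewrite !inE => /andP [-> yg]; apply: (subvP _ _ yg); rewrite -memvE.
Qed.

Lemma card_points_covered L : covered L ->
  (#|points L| * (#|F| - 1) = #|F| ^ \dim L - 1)%N.
Proof.
move=> covL; rewrite -card_bigcup_points -card_punct.
suff -> : \bigcup_(g in points L) punct <[v g]> = punct L by [].
apply/eqP; rewrite eqEsubset bigcup_points_sub /=; apply/subsetP => y.
rewrite !inE => /andP [y0 yL]; have [g gL yg] := covered_point covL yL y0.
apply/bigcupP; exists g; rewrite // !inE y0.
by rewrite (vline_eq (v_neq0 (subsetP (points_sub L) _ gL)) yg) memv_line.
Qed.

Lemma card_points_lt L y : y \in L -> y != 0 ->
  (forall g, g \in E -> y \notin <[v g]>%VS) ->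
  (#|points L| * (#|F| - 1) < #|F| ^ \dim L - 1)%N.
Proof.
move=> yL y0 ny; rewrite -card_bigcup_points -card_punct; apply: proper_card.
apply/properP; split; first exact: bigcup_points_sub.
exists y; first by rewrite !inE y0.
apply/bigcupP => -[g]; rewrite !inE => /andP [gE _] /andP [_ yg].
by move: (ny g gE); rewrite yg.
Qed.

Lemma has_induced_minor_uniform L a : (0 < #|points L|)%N ->
  (forall X, X \subset points L -> indep M X = (#|X| <= a)%N) ->
  has_induced_minor M (U a #|points L|).
Proof.
case/card_gt0P => g0 g0L indepL.
have groundL : ground (restrict M (points L)) = points L by apply/setIidPr/points_sub.
exists (restrict M (points L)); first exact/im_restr/flat_points/im_refl.
have rank_inj : {in points L &, injective (enum_rank_in g0L)}.
  by move=> g h gL hL /(congr1 enum_val); rewrite !enum_rankK_in.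
exists (enum_rank_in g0L); rewrite groundL; split => //.
  by apply/eqP; rewrite eqEcard subsetT card_in_imset // cardsT card_ord leqnn.
move=> X XL /=; rewrite (setIidPr (points_sub L)) XL /= indepL // card_in_imset //.
by move=> g h /(subsetP XL) gL /(subsetP XL) hL; apply: rank_inj.
Qed.

Section LinesThroughPoint.
Variable e : T.
Hypothesis eE : e \in E.
Local Notation Me := (contract M [set e]).

Local Notation eline := (pline e).

Lemma dim_eline g : g \in E :\ e -> \dim (eline g) = 2%N.
Proof. by case/setD1P => ge gE; rewrite dim_pline // eq_sym. Qed.

Lemma eline_eq g L : g \in E :\ e -> \dim L = 2%N -> v e \in L -> v g \in L ->
  eline g = L.
Proof.
move=> geE dL eL gL; apply/eqP; rewrite eqEdim pline_sub //=.
by rewrite dL dim_eline.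
Qed.

Definition eline_rep g := odflt g [pick h | (h \in E :\ e) && (v h \in eline g)].

Lemma eline_repP g : g \in E :\ e ->
  eline_rep g \in E :\ e /\ eline (eline_rep g) = eline g.
Proof.
move=> geE; rewrite /eline_rep; case: pickP => [h /andP [heE hg]|/(_ g)] /=.
  by split; rewrite // (eline_eq heE (dim_eline geE) (pline_meml e g) hg).
by rewrite geE pline_memr.
Qed.

Lemma eline_rep_eq g h : g \in E :\ e -> eline g = eline h ->
  eline_rep g = eline_rep h.
Proof.
move=> geE gh; rewrite /eline_rep -gh; case: pickP => [//|/(_ g) /=].
by rewrite geE pline_memr.
Qed.

Definition eline_reps := [set g in E :\ e | eline_rep g == g].

Lemma eline_reps_sub : eline_reps \subset E :\ e.
Proof. by apply/subsetP => g; rewrite inE => /andP []. Qed.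

Lemma eline_rep_reps g : g \in E :\ e -> eline_rep g \in eline_reps.
Proof.
move=> geE; have [reE rg] := eline_repP geE.
by rewrite inE reE (eline_rep_eq reE rg) eqxx.
Qed.

Lemma eline_reps_sep g h : g \in eline_reps -> h \in eline_reps -> g != h ->
  v h \notin eline g.
Proof.
move=> /setIdP [geE /eqP gr] /setIdP [heE /eqP hr]; apply: contraNN => hg.
have hline := eline_eq heE (dim_eline geE) (pline_meml e g) hg.
by rewrite -gr -hr (eline_rep_eq heE hline).
Qed.

Lemma contract_indep Y : Y \subset E :\ e ->
  indep Me Y = (\dim (vspan Y + <[v e]>) == #|Y|.+1).
Proof.
move=> YE /=; have YeE : Y :|: [set e] \subset E.
  by rewrite subUset sub1set eE (subset_trans YE) ?subsetDl.
by rewrite YE (Msimple.1 e eE) addn1 mrank_vspan // vspanU vspan1.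
Qed.

Lemma contract_indep1 g : g \in E :\ e -> indep Me [set g].
Proof.
by move=> geE; rewrite contract_indep ?sub1set // vspan1 addvC dim_eline ?cards1.
Qed.

Lemma contract_nonloop g : g \in E :\ e -> ~~ loop Me g.
Proof.
move=> geE; rewrite /loop -lt0n -[X in (X <= _)%N](cards1 g).
exact: indep_leq_mrank (subxx _) (contract_indep1 geE).
Qed.

Lemma is_si_contract : is_si Me (restrict Me eline_reps).
Proof.
exists eline_reps; split => //.
- exact: eline_reps_sub.
- by move=> g /(subsetP eline_reps_sub); apply: contract_nonloop.
- move=> g h gS hS /and5P [_ _ _ _ /eqP rank2]; apply/eqP; apply: contraT => gh.
  have [geE heE] := (subsetP eline_reps_sub _ gS, subsetP eline_reps_sub _ hS).
  suff /(indep_leq_mrank (subxx _)) : indep Me [set g; h].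
    by rewrite rank2 cards2 gh.
  rewrite contract_indep ?subUset ?sub1set ?geE ?heE // cards2 gh vspanU !vspan1.
  rewrite addvC addvA addvC -/(pline e g) dim_add_line ?dim_eline //.
  exact: eline_reps_sep.
- move=> g geE _; exists (eline_rep g); first exact: eline_rep_reps.
  have [reE rg] := eline_repP geE.
  case: eqP => [-> //|_ /=].
  rewrite /parallel /= geE reE !contract_nonloop //= eqn_leq; apply/andP; split.
    apply/bigmax_leqP => Y /andP [YS]; rewrite contract_indep; last first.
      by apply: subset_trans YS _; rewrite subUset !sub1set geE reE.
    move=> /eqP dimY; rewrite -ltnS -dimY -(dim_eline geE); apply: dimvS.
    rewrite subv_add -memvE pline_meml andbT; apply/vspan_subP => h /(subsetP YS).
    by rewrite !inE => /orP [] /eqP ->; [exact: pline_memr | rewrite -rg pline_memr].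
  rewrite -[1%N](cards1 g); apply: indep_leq_mrank (contract_indep1 geE).
  by rewrite sub1set !inE eqxx.
Qed.

Definition eline_off g := [set y | y \in eline g] :\: [set y | y \in <[v e]>%VS].

Lemma eline_off_cover W (J : {set T}) : v e \in W -> J \subset E :\ e ->
  (forall g, g \in J -> v g \in W) ->
  {in J &, forall g h, g != h -> v h \notin eline g} ->
  (#|J| * (#|F| ^ 2 - #|F|) = #|F| ^ \dim W - #|F|)%N <->
  (forall y, y \in W -> y \notin <[v e]>%VS -> exists2 g, g \in J & y \in eline g).
Proof.
move=> eW JE JW Jsep; set Z := [set y | y \in W] :\: [set y | y \in <[v e]>%VS].
have cardZ : #|Z| = (#|F| ^ \dim W - #|F|)%N.
  by rewrite card_vsetD -?memvE // dim_vline v_neq0.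
have sub : \bigcup_(g in J) eline_off g \subset Z.
  apply/bigcupsP => g gJ; apply/subsetP => y; rewrite !inE => /andP [-> yg] /=.
  by apply: (subvP (pline_sub eW (JW g gJ))).
rewrite -cardZ -(@card_bigcup_uniform _ _ _ eline_off); last first.
- move=> g /(subsetP JE) geE; rewrite card_vsetD -?memvE ?pline_meml //.
  by rewrite dim_eline // dim_vline v_neq0.
- move=> g h gJ hJ gh; rewrite -setI_eq0; apply/eqP/setP => y; rewrite !inE.
  apply/negP => /andP [/andP [ye yg] /andP [_ yh]].
  have [geE heE] := (subsetP JE _ gJ, subsetP JE _ hJ).
  have lineE k : k \in E :\ e -> y \in eline k -> eline k = (<[v e]> + <[y]>)%VS.
    by move=> keE yk; apply: dim2_span; rewrite ?dim_eline ?pline_meml ?v_neq0.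
  by case/negP: (Jsep g h gJ hJ gh); rewrite (lineE g) // -(lineE h) // pline_memr.
split => [cardE|cover].
  have unionZ : \bigcup_(g in J) eline_off g = Z.
    by apply/eqP; rewrite eqEcard sub cardE leqnn.
  move=> y yW ye.
  have : y \in Z by rewrite !inE yW ye.
  by rewrite -unionZ => /bigcupP [g gJ]; rewrite !inE => /andP [_ yg]; exists g.
suff -> : \bigcup_(g in J) eline_off g = Z by [].
apply/eqP; rewrite eqEsubset sub /=; apply/subsetP => y.
rewrite !inE => /andP [ye yW]; have [g gJ yg] := cover y yW ye.
by apply/bigcupP; exists g; rewrite // !inE ye yg.
Qed.

(* si(M/e) has (q^(r-1) - 1)/(q - 1) points, one for each line of M through e:
   as many as there are lines of V through e, so all of them are lines of M. *)
Lemma line_has_second_point (q r : nat) :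
  #|F| = q -> \dim (vspan E) = r -> (2 < r)%N ->
  (forall N, is_si Me N -> isPG N (r - 2) q) ->
  forall L, (L <= vspan E)%VS -> \dim L = 2%N -> v e \in L ->
  exists2 g, g \in E & (g != e) && (v g \in L).
Proof.
move=> cardF dimV r_gt2 siPG L LV dL eL.
have [F' [cardF' [phi [phi_inj phi_im _]]]] := siPG _ is_si_contract.
have groundS : ground (restrict Me eline_reps) = eline_reps.
  exact/setIidPr/eline_reps_sub.
rewrite groundS in phi_inj phi_im.
have cardS : ((q - 1) * #|eline_reps| = q ^ (r - 1) - 1)%N.
  rewrite -(card_in_imset phi_inj) phi_im -cardF' card_pg_points.
  by congr (_ ^ _ - 1)%N; lia.
have [|y yL ye] := @exists_notin _ _ L <[v e]>%VS.
  by rewrite dL dim_vline v_neq0.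
have SV g : g \in eline_reps -> v g \in vspan E.
  by move/(subsetP eline_reps_sub)/setD1P => [_ /vspan_mem].
have cardSq :
    (#|eline_reps| * (#|F| ^ 2 - #|F|) = #|F| ^ \dim (vspan E) - #|F|)%N.
  rewrite cardF dimV; have -> : r = (r - 1).+1 by lia.
  rewrite -mulnn expnS.
  have -> : (q * q - q = (q - 1) * q)%N by rewrite mulnBl mul1n.
  by rewrite mulnA [(#|_| * _)%N]mulnC cardS mulnBl mul1n mulnC.
have [g gS yg] := (eline_off_cover (vspan_mem eE) eline_reps_sub SV eline_reps_sep).1
  cardSq y (subvP LV y yL) ye.
have geE := subsetP eline_reps_sub g gS; exists g; first by case/setD1P: geE.
rewrite (dim2_eq dL (dim_eline geE) (v_neq0 eE) ye eL yL (pline_meml e g) yg).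
by case/setD1P: geE => -> _; rewrite pline_memr.
Qed.

End LinesThroughPoint.

Section Coordinates.
Local Notation V := (vspan E).
Local Notation B := (vbasis V).

Definition coords (x : vT) : 'rV[F]_(\dim V) := \row_i coord B i x.

Lemma coords_is_linear : linear coords.
Proof. by move=> a x y; apply/rowP => i; rewrite !mxE linearP. Qed.
HB.instance Definition _ := GRing.isSemilinear.Build F _ _ _ coords
  (GRing.semilinear_linear coords_is_linear).

Lemma coords_eq0 x : x \in V -> coords x = 0 -> x = 0.
Proof.
move=> xV cx0; rewrite (coord_vbasis xV); apply: big1 => i _.
by have /rowP/(_ i) := cx0; rewrite !mxE => ->; rewrite scale0r.
Qed.

Lemma coords_surj (w : 'rV[F]_(\dim V)) : exists2 x, x \in V & coords x = w.
Proof.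
exists (\sum_i w 0 i *: B`_i).
  by apply: rpred_sum => i _; apply/rpredZ/vbasis_mem/mem_nth; rewrite size_tuple.
by apply/rowP => j; rewrite mxE coord_sum_free //; apply: basis_free (vbasisP V).
Qed.

Lemma dim_span_coords (s : seq vT) : {subset s <= V} ->
  \dim <<map coords s>> = \dim <<s>>.
Proof.
move=> sV; have -> : map coords s = map (linfun coords) s.
  by apply: eq_map => x; rewrite lfunE.
rewrite -limg_span limg_dim_eq //; apply/eqP; rewrite -subv0; apply/subvP => x.
rewrite memv_cap memv_ker lfunE /= => /andP [xs /eqP cx0]; rewrite memv0.
by apply/eqP/(coords_eq0 _ cx0); move: xs; apply/subvP/span_subvP.
Qed.

Definition pg_of g := [set y | y \in <[coords (v g)]>%VS].

Lemma coords_neq0 g : g \in E -> coords (v g) != 0.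
Proof.
by move=> gE; apply: contra_neq (v_neq0 gE) => /(coords_eq0 (vspan_mem gE)).
Qed.

Lemma pg_of_point g : g \in E -> pg_point (pg_of g).
Proof. by move=> gE; apply/pg_pointP; exists (coords (v g)); rewrite ?coords_neq0. Qed.

Lemma pg_of_inj : {in E &, injective pg_of}.
Proof.
move=> g h gE hE gh; apply: (v_vline_inj hE gE).
have : coords (v g) \in pg_of h by rewrite -gh inE memv_line.
rewrite inE => /vlineP [c cg]; apply/vlineP; exists c; apply/eqP.
rewrite -subr_eq0; apply/eqP/coords_eq0; first by rewrite rpredB ?rpredZ ?vspan_mem.
by rewrite linearB linearZ /= cg subrr.
Qed.

Lemma span_pg_reps X : X \subset E ->
  <<[seq pg_rep P | P <- enum (pg_of @: X)%SET]>>%VS =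
  <<[seq coords x | x <- [seq v g | g <- enum X]]>>%VS.
Proof.
move=> XE; apply/eqP; rewrite eqEsubv; apply/andP; split; apply/span_subvP => y.
  case/mapP => P; rewrite mem_enum => /imsetP [g gX ->] ->.
  have /setP/(_ (pg_rep (pg_of g))) := pg_rep_vline (pg_of_point (subsetP XE _ gX)).
  rewrite !inE memv_line => /vlineP [c ->]; apply/rpredZ/memv_span.
  by rewrite -map_comp; apply: map_f; rewrite mem_enum.
rewrite -map_comp => /mapP [g]; rewrite mem_enum => gX ->.
have /setP/(_ (coords (v g))) := pg_rep_vline (pg_of_point (subsetP XE _ gX)).
rewrite !inE memv_line => /esym /vlineP [c /= ->]; apply/rpredZ/memv_span.
by apply: map_f; rewrite mem_enum imset_f.
Qed.

Lemma covered_miso_PG : covered V -> miso M (PGmat F (\dim V)).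
Proof.
move=> covV; exists pg_of; split; first exact: pg_of_inj.
  apply/setP => P; rewrite inE; apply/imsetP/idP => [[g gE ->]|].
    exact: pg_of_point.
  case/pg_pointP => w w0 ->; have [x xV cx] := coords_surj w.
  have x0 : x != 0 by apply: contra_neq w0 => x0; rewrite -cx x0 linear0.
  have [g gE /vlineP [c xc]] := covV x xV x0; exists g => //.
  have wg : w \in <[coords (v g)]>%VS by rewrite -cx xc linearZ /= memvZ ?memv_line.
  by rewrite /pg_of (vline_eq w0 wg).
move=> X XE; rewrite indepE XE /=.
have -> : pg_of @: X \subset [set P | pg_point P].
  by apply/subsetP => P /imsetP [g gX ->]; rewrite inE pg_of_point ?(subsetP XE).
have XE' : {subset X <= E} by apply/subsetP.
rewrite /= /free size_map -cardE card_in_imset; last first.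
  by move=> g h /XE' gE /XE' hE; apply: pg_of_inj.
rewrite span_pg_reps // dim_span_coords // => y /mapP [g]; rewrite mem_enum => gX ->.
exact/vspan_mem/XE'.
Qed.

End Coordinates.

Lemma card_points_covered_line L : \dim L = 2%N -> covered L ->
  #|points L| = #|F|.+1.
Proof.
move=> dL /card_points_covered; rewrite dL -mulnn.
have := finNzRing_gt1 F; move: #|F| #|points L| => q k; nia.
Qed.

Lemma uncovered_line_minor L : \dim L = 2%N -> (3 <= #|points L|)%N -> ~ covered L ->
  exists2 k, (3 <= k <= #|F|)%N & has_induced_minor M (U 2 k)%N.
Proof.
move=> dL L3 /not_covered [y [yL y0 ny]]; exists #|points L|.
  rewrite L3; have := card_points_lt yL y0 ny; rewrite dL -mulnn.
  by move: #|F| #|points L| => q k; nia.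
apply: has_induced_minor_uniform => [|X XL]; first exact: leq_trans L3.
apply/idP/idP => [|X2]; first by rewrite -dL; apply: indep_points_card.
exact: indep_card_le2 (subset_trans XL (points_sub L)) X2.
Qed.

Section MissingPoint.
Local Notation V := (vspan E).
Variable w : vT.
Hypotheses (wV : w \in V) (w0 : w != 0).
Hypothesis w_missing : forall g, g \in E -> w \notin <[v g]>%VS.
Hypothesis second_point : forall g L, g \in E -> (L <= V)%VS -> \dim L = 2%N ->
  v g \in L -> exists2 h, h \in E & (h != g) && (v h \in L).
Hypothesis three_points_covered : forall L, (L <= V)%VS -> \dim L = 2%N ->
  (3 <= #|points L|)%N -> covered L.
Hypothesis card_F_gt2 : (2 < #|F|)%N.

Lemma covered_notin_w L : covered L -> w \notin L.
Proof.
by move=> covL; apply/negP => wL; have [g /w_missing] := covL w wL w0; move/negP.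
Qed.

Lemma card_points_line_w L : (L <= V)%VS -> \dim L = 2%N -> w \in L ->
  (#|points L| <= 2)%N.
Proof.
move=> LV dL wL; rewrite leqNgt; apply/negP => L3.
by case/negP: (covered_notin_w (three_points_covered LV dL L3)).
Qed.

Definition wline g := (<[w]> + <[v g]>)%VS.

Lemma w_wline g : w \in wline g.
Proof. by rewrite (subvP (addvSl _ _)) ?memv_line. Qed.

Lemma v_wline g : v g \in wline g.
Proof. by rewrite (subvP (addvSr _ _)) ?memv_line. Qed.

Lemma v_notin_vline_w g : g \in E -> v g \notin <[w]>%VS.
Proof.
move=> gE; apply: contra (w_missing gE) => gw.
by rewrite (vline_eq (v_neq0 gE) gw) memv_line.
Qed.

Lemma dim_wline g : g \in E -> \dim (wline g) = 2%N.
Proof.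
by move=> gE; rewrite /wline addvC dim_add_line ?v_notin_vline_w // dim_vline w0.
Qed.

Lemma wline_sub g L : w \in L -> v g \in L -> (wline g <= L)%VS.
Proof. by move=> wL gL; rewrite subv_add -!memvE wL gL. Qed.

Lemma wline_eq g h : g \in E -> h \in E -> v g \in wline h -> wline g = wline h.
Proof.
move=> gE hE gh; apply: dim2_eq (dim_wline gE) (dim_wline hE) w0 _ _ _ _ gh;
  by rewrite ?v_notin_vline_w ?w_wline ?v_wline.
Qed.

Lemma partner g : g \in E -> exists2 h, h \in E & (h != g) && (v h \in wline g).
Proof.
move=> gE; apply: second_point; rewrite ?dim_wline ?v_wline //.
by apply: wline_sub; rewrite ?vspan_mem.
Qed.

Lemma partner_notin L g h : \dim L = 2%N -> w \notin L -> g \in points L ->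
  h \in E -> h != g -> v h \in wline g -> v h \notin L.
Proof.
move=> dL wL gL hE hg hwg; apply: contra wL => hL.
have gE := subsetP (points_sub L) g gL.
have gw : g \in points (wline g) by rewrite inE gE v_wline.
have hw : h \in points (wline g) by rewrite inE hE hwg.
have hL' : h \in points L by rewrite inE hE hL.
by rewrite -(points_line_eq (dim_wline gE) dL _ gw hw gL hL') 1?eq_sym ?w_wline.
Qed.

Section Plane.
Variable P : {vspace vT}.
Hypotheses (PV : (P <= V)%VS) (dimP : \dim P = 3%N) (wP : w \in P).

Lemma plane_lines_meet L m : (L <= P)%VS -> (m <= P)%VS -> \dim L = 2%N ->
  \dim m = 2%N -> covered L -> exists2 g, g \in points L & g \in points m.
Proof.
move=> LP mP dL dm covL; have [y] := dim2_cap_neq0 dimP LP mP dL dm.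
rewrite memv_cap => /andP [yL ym] y0; have [g gL gy] := covered_point covL yL y0.
exists g => //; rewrite inE (subsetP (points_sub L)) //=.
by apply: (subvP _ _ gy); rewrite -memvE.
Qed.

Lemma wline_sub_plane g : g \in points P -> (wline g <= P)%VS.
Proof. by rewrite inE => /andP [_ gP]; apply: wline_sub. Qed.

(* The line through w and s meets L and m in points of M; as it carries at most
   two points, these coincide, and then they are z. *)
Lemma covered_lines_cover_plane L m z s : (L <= P)%VS -> (m <= P)%VS ->
  \dim L = 2%N -> \dim m = 2%N -> covered L -> covered m -> L != m ->
  z \in points L -> z \in points m -> s \in points P ->
  [|| v s \in L, v s \in m | v s \in wline z].
Proof.
move=> LP mP dL dm covL covm Lm zL zm sP.
apply/negPn/negP; rewrite !negb_or => /and3P [sL sm sz].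
have sE := subsetP (points_sub P) s sP; have dk := dim_wline sE.
have kP := wline_sub_plane sP; have kV := subv_trans kP PV.
have [a aL ak] := plane_lines_meet LP kP dL dk covL.
have [b bm bk] := plane_lines_meet mP kP dm dk covm.
have sk : s \in points (wline s) by rewrite inE sE v_wline.
have nin g W : g \in points W -> v s \notin W -> s != g.
  by rewrite inE => /andP [_ gW]; apply: contraNneq => ->.
have [ab|ab] := eqVneq a b; last first.
  have := card_points_line_w kV dk (w_wline s).
  by rewrite leqNgt (card_points_ge3 sk ak bk (nin _ _ aL sL) (nin _ _ bm sm) ab).
subst b; have az : a = z.
  apply/eqP; apply: contraNT Lm => az; apply/eqP.
  exact: points_line_eq dL dm az aL zL bm zm.
subst a; have zE := subsetP (points_sub L) z zL.
move: ak; rewrite inE => /andP [_ /(wline_eq zE sE) wzs].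
by case/negP: sz; rewrite wzs v_wline.
Qed.

Lemma covered_line_pair L : (L <= P)%VS -> \dim L = 2%N -> covered L ->
  exists m z t, [/\ (m <= P)%VS, \dim m = 2%N, covered m,
    [/\ z \in points L, z \in points m & t \in points m] & v t \notin L].
Proof.
move=> LP dL covL; have wL := covered_notin_w covL.
have /card_gt1P [z1 [z2 [z1L z2L z12]]] : (1 < #|points L|)%N.
  by rewrite card_points_covered_line // ltnS (leq_trans _ card_F_gt2).
have [z1E z2E] := (subsetP (points_sub L) _ z1L, subsetP (points_sub L) _ z2L).
have [t1 t1E /andP [t1z1 t1w]] := partner z1E.
have [t2 t2E /andP [t2z2 t2w]] := partner z2E.
have t1L := partner_notin dL wL z1L t1E t1z1 t1w.
have t12 : t1 != t2.
  apply: contraNneq wL => t12; subst t2.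
  have z1w : z1 \in points (wline z1) by rewrite inE z1E v_wline.
  have z2w : z2 \in points (wline z1).
    by rewrite inE z2E -(wline_eq t1E z1E t1w) (wline_eq t1E z2E t2w) v_wline.
  by rewrite -(points_line_eq (dim_wline z1E) dL z12 z1w z2w z1L z2L) w_wline.
have tP g t : g \in points L -> v t \in wline g -> v t \in P.
  by move=> /(subsetP (pointsS LP)) /wline_sub_plane /subvP; apply.
have mP : (pline t1 t2 <= P)%VS.
  by apply: pline_sub; [apply: tP z1L t1w | apply: tP z2L t2w].
have dm := dim_pline t1E t2E t12; have [t1m t2m] := pline_points t1E t2E.
have [z zL zm] := plane_lines_meet LP mP dL dm covL.
exists (pline t1 t2), z, t1; split => //.
apply: three_points_covered (subv_trans mP PV) dm (card_points_ge3 t1m t2m zm t12 _ _).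
  by apply: contraNneq t1L => ->; move: zL; rewrite inE => /andP [].
have t2L := partner_notin dL wL z2L t2E t2z2 t2w.
by apply: contraNneq t2L => ->; move: zL; rewrite inE => /andP [].
Qed.

Lemma no_covered_line L : (L <= P)%VS -> \dim L = 2%N -> ~ covered L.
Proof.
move=> LP dL covL.
have [m [z [t [mP dm covm [zL zm tm] tL]]]] := covered_line_pair LP dL covL.
have [wL wm] := (covered_notin_w covL, covered_notin_w covm).
have [zE tE] := (subsetP (points_sub L) z zL, subsetP (points_sub m) t tm).
have [p pE /andP [pz pw]] := partner zE.
have pL := partner_notin dL wL zL pE pz pw.
have pm := partner_notin dm wm zm pE pz pw.
have tp : t != p by apply: contraNneq pm => <-; move: tm; rewrite inE => /andP [].
have kP : (pline t p <= P)%VS.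
  apply: pline_sub; first by move: tm; rewrite inE => /andP [_ /(subvP mP)].
  exact: (subvP (wline_sub_plane (subsetP (pointsS LP) _ zL))).
have dk := dim_pline tE pE tp; have [tk pk] := pline_points tE pE.
have [z' z'L z'k] := plane_lines_meet LP kP dL dk covL.
have z'L' : v z' \in L by move: z'L; rewrite inE => /andP [].
have covk : covered (pline t p).
  apply: (three_points_covered (subv_trans kP PV) dk).
  apply: card_points_ge3 tk pk z'k tp _ _.
    by apply: contraNneq tL => ->.
  by apply: contraNneq pL => ->.
(* This is where q > 2 is used: the covered line [pline t p] has q + 1 > 3 points. *)
have [s sk] : exists2 s, s \in points (pline t p) & s \notin [:: t; p; z'].
  apply/subsetPn; apply: contraTN card_F_gt2 => /subset_leq_card.
  rewrite card_points_covered_line // => /leq_trans/(_ (card_size _)) q3.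
  by rewrite -leqNgt.
rewrite !inE !negb_or => /and3P [st sp sz'].
have sE := subsetP (points_sub _) s sk.
have sP : s \in points P by apply: subsetP (pointsS kP) s sk.
have sline W g : \dim W = 2%N -> g \in points W -> g \in points (pline t p) ->
    s != g -> v s \in W -> pline t p = W.
  by move=> dW gW gk sg sW; apply: points_line_eq dk dW sg sk gk _ gW; rewrite inE sE.
have Lm : L != m by apply: contraNneq tL => ->; move: tm; rewrite inE => /andP [].
case/or3P: (covered_lines_cover_plane LP mP dL dm covL covm Lm zL zm sP).
- by move/(sline _ _ dL z'L z'k sz') => kL; move: tL; rewrite -kL pline_meml.
- by move/(sline _ _ dm tm tk st) => km; move: pm; rewrite -km pline_memr.
have pz' : p \in points (wline z) by rewrite inE pE.
move/(sline _ _ (dim_wline zE) pz' pk sp) => kw.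
by move: (covered_notin_w covk); rewrite kw w_wline.
Qed.

Lemma plane_arc L : (L <= P)%VS -> \dim L = 2%N -> (#|points L| <= 2)%N.
Proof.
move=> LP dL; rewrite leqNgt; apply/negP => L3.
exact: no_covered_line LP dL (three_points_covered (subv_trans LP PV) dL L3).
Qed.

(* The q + 1 lines of P through e each carry exactly one further point. *)
Lemma card_points_plane e : e \in points P -> #|points P| = (#|F| + 2)%N.
Proof.
move=> eP; have eE := subsetP (points_sub P) e eP.
have eP' : v e \in P by move: eP; rewrite inE => /andP [].
have JE : points P :\ e \subset E :\ e by apply: setSD (points_sub P).
have JP g : g \in points P :\ e -> v g \in P by rewrite !inE => /and3P [].
have Jsep : {in points P :\ e &, forall g h, g != h -> v h \notin pline e g}.
  move=> g h gJ hJ gh; apply/negP => hg.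
  have [geE heE] := (subsetP JE g gJ, subsetP JE h hJ).
  have := plane_arc (pline_sub eP' (JP g gJ)) (dim_eline eE geE); apply/negP.
  have [/setD1P [ge gE] /setD1P [he hE]] := (geE, heE).
  rewrite -ltnNge (@card_points_ge3 _ e g h) ?inE ?eE ?gE ?hE //;
    by rewrite ?pline_meml ?pline_memr // eq_sym.
have cover y : y \in P -> y \notin <[v e]>%VS ->
    exists2 g, g \in points P :\ e & y \in pline e g.
  move=> yP ye; set L := (<[v e]> + <[y]>)%VS.
  have dL : \dim L = 2%N by rewrite /L addvC dim_add_line // dim_vline v_neq0.
  have LP : (L <= P)%VS by rewrite subv_add -!memvE eP' yP.
  have eL : v e \in L by rewrite (subvP (addvSl _ _)) ?memv_line.
  have [g gE /andP [ge gL]] := second_point eE (subv_trans LP PV) dL eL.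
  have geE : g \in E :\ e by rewrite !inE ge gE.
  exists g; first by rewrite !inE ge gE (subvP LP).
  by rewrite (eline_eq eE geE dL eL gL) (subvP (addvSr _ _)) ?memv_line.
have := (eline_off_cover eE eP' JE JP Jsep).2 cover.
rewrite dimP (cardsD1 e (points P)) eP add1n !expnS expn0 !muln1.
by move: #|_| #|F| card_F_gt2 => k q; nia.
Qed.

Lemma indep_points_plane X : X \subset points P -> indep M X = (#|X| <= 3)%N.
Proof.
move=> XP; apply/idP/idP => [|X3]; first by rewrite -dimP; apply: indep_points_card.
have XE := subset_trans XP (points_sub P).
move: X3; rewrite leq_eqVlt ltnS => /orP [/eqP X3|]; last exact: indep_card_le2.
rewrite indepE XE X3 /=.
have XspanP : (vspan X <= P)%VS := subv_trans (vspanS XP) (vspan_points P).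
have le3 : (\dim (vspan X) <= 3)%N by rewrite -dimP dimvS.
have /card_gt1P [a [b [aX bX ab]]] : (1 < #|X|)%N by rewrite X3.
have ge2 : (2 <= \dim (vspan X))%N.
  rewrite -(dim_pline (subsetP XE _ aX) (subsetP XE _ bX) ab); apply/dimvS/pline_sub;
  exact: vspan_mem.
have ne2 : \dim (vspan X) != 2%N.
  apply/eqP => d2; have := plane_arc XspanP d2; apply/negP; rewrite -ltnNge.
  rewrite (leq_trans _ (subset_leq_card (_ : X \subset points (vspan X)))) ?X3 //.
  by apply/subsetP => g gX; rewrite inE (subsetP XE) ?vspan_mem.
by move: le3 ge2 ne2; lia.
Qed.

End Plane.

Hypothesis dimV_gt2 : (2 < \dim V)%N.

Lemma arc_minor : has_induced_minor M (U 3 (#|F| + 2))%N.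
Proof.
have [e eE] : exists e, e \in E.
  by apply/set0Pn; apply: contraTneq dimV_gt2 => ->; rewrite vspan0 dimv0.
have W2V : (<[v e]> + <[w]> <= V)%VS by rewrite subv_add -!memvE vspan_mem.
have dW2 : \dim (<[v e]> + <[w]>) = 2%N.
  by rewrite addvC dim_add_line ?w_missing // dim_vline v_neq0.
have [P [W2P PV dimP]] := exists_dim3 W2V dW2 dimV_gt2.
have wP : w \in P by rewrite (subvP W2P) ?(subvP (addvSr _ _)) ?memv_line.
have eP : e \in points P.
  by rewrite inE eE (subvP W2P) ?(subvP (addvSl _ _)) ?memv_line.
rewrite -(card_points_plane PV dimP wP eP).
apply: has_induced_minor_uniform; first by apply/card_gt0P; exists e.
exact: indep_points_plane PV dimP wP.
Qed.

End MissingPoint.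
End Represented.

Theorem lemma3p4 (q : nat) (T : finType) (M : matroid T) (r : nat) :
  prime_power q -> 2 < q ->
  simple M -> representable q M ->
  mrank M (ground M) = r -> 3 <= r ->
  ~ isPG M (r - 1) q ->
  (forall e, e \in ground M ->
     forall N, is_si (contract M [set e]) N -> isPG N (r - 2) q) ->
  (exists2 k, 3 <= k <= q & has_induced_minor M (U 2 k)) \/
  has_induced_minor M (U 3 (q + 2)).
Proof.
move=> _ q_gt2 Msimple [F [n [v [cardF Mrep]]]] rankM r_ge3 notPG siPG.
pose V := vspan v (ground M).
have dimV : \dim V = r by rewrite -rankM (mrank_vspan Mrep).
have second_point g L : g \in ground M -> (L <= V)%VS -> \dim L = 2 -> v g \in L ->
    exists2 h, h \in ground M & (h != g) && (v h \in L).
  move=> gE; exact: (line_has_second_point Mrep Msimple gE cardF dimV r_ge3 (siPG g gE)).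
have [|w [wV w0 w_missing]] := @not_covered _ _ _ v M V.
  move=> covV; apply: notPG; exists F; split => //.
  have -> : (r - 1).+1 = \dim V by rewrite dimV; lia.
  exact: covered_miso_PG Mrep Msimple covV.
case: (classic (exists2 L, [/\ (L <= V)%VS, \dim L = 2 & 3 <= #|points v M L|] &
                          ~ covered v M L)) => [[L [_ dL L3] ncovL]|none].
  by left; rewrite -cardF; exact: (uncovered_line_minor Mrep Msimple dL L3 ncovL).
right; rewrite -cardF; apply: (arc_minor Mrep Msimple wV w0 w_missing second_point).
- move=> L LV dL L3; apply: NNPP => ncovL; apply: none.
  by exists L; first split.
- by move: q_gt2; rewrite -cardF.
- by rewrite dimV.
Qed.
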